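(* Let $\lambda$ be a nonzero real number and let $p$ be a positive integer. For any integer $n\ge1$, \[ \sum_{k=1}^{\infty}\frac{n\,H_{k,\lambda}^{(p)}}{\binom{k+n-1}{n}(k+n)}=\sum_{k=1}^{\infty}\frac{(-\lambda)^{k-1}(1)_{k,1/\lambda}}{(k-1)!\,k^{p}\binom{k+n-1}{n}}. \]
   Context: For real $x$ and $\mu\neq 0$, set $(x)_{0,\mu}=1$ and $(x)_{n,\mu}=x(x-\mu)\cdots(x-(n-1)\mu)$ for $n\ge1$. The degenerate higher-order harmonic numbers are $H_{0,\lambda}^{(k)}=0$ and $H_{n,\lambda}^{(k)}=\sum_{l=1}^{n}\frac{(-\lambda)^{l-1}(1)_{l,1/\lambda}}{l^{k}(l-1)!}$ for $n\ge1$. *)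

From Stdlib Require Import Reals Arith Factorial.
From Coquelicot Require Import Coquelicot.
Open Scope R_scope.

Fixpoint dfall (x mu : R) (n : nat) : R :=
  match n with
  | O => 1
  | S m => dfall x mu m * (x - INR m * mu)
  end.

Fixpoint dharm (lam : R) (k : nat) (n : nat) : R :=
  match n with
  | O => 0
  | S m => dharm lam k m
           + ((- lam) ^ m * dfall 1 (1 / lam) (S m))
             / (INR (S m) ^ k * INR (fact m))
  end.

(* Write A_j for the j-th summand of the degenerate harmonic number, so that
   H_(j+1) = A_0 + ... + A_j, and B_j = 1 / C(j+n, n).  The left series is
   sum_j H_(j+1) (B_j - B_(j+1)) and the right one is sum_j A_j B_j, so by
   summation by parts their partial sums differ by the boundary term
   H_(K+1) B_(K+1).  The ratio A_(j+1) / A_j has the sign of j + 1 - lam, so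
   A_j has eventually constant sign; since B decreases to 0, convergence of
   either series then forces the boundary term to vanish. *)
From Stdlib Require Import Reals Arith Factorial Lia Lra.
From Coquelicot Require Import Coquelicot.
Open Scope R_scope.

Lemma sum_n_succ (a : nat -> R) (K : nat) : sum_n a (S K) = sum_n a K + a (S K).
Proof. exact (sum_Sn a K). Qed.

Lemma sum_n_opp (a : nat -> R) (K : nat) :
  sum_n (fun j => - a j) K = - sum_n a K :> R.
Proof.
  induction K as [|K IHK].
  - rewrite !sum_O; reflexivity.
  - rewrite !sum_n_succ, IHK; ring.
Qed.

Lemma sum_n_by_parts (A B : nat -> R) (K : nat) :
  sum_n (fun j => sum_n A j * (B j - B (S j))) K
  = sum_n (fun j => A j * B j) K - sum_n A K * B (S K) :> R.
Proof.
  induction K as [|K IHK].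
  - rewrite !sum_O; ring.
  - rewrite !sum_n_succ, IHK; ring.
Qed.

Lemma sum_n_le_of_nonneg_from (A : nat -> R) (N K M : nat) :
  (forall j, (N <= j)%nat -> 0 <= A j) ->
  (N <= K)%nat -> (K <= M)%nat -> sum_n A K <= sum_n A M.
Proof.
  intros A_nonneg NK KM; induction KM as [|M KM IHKM]; [lra|].
  rewrite sum_n_succ.
  assert (0 <= A (S M)) by (apply A_nonneg; lia).
  lra.
Qed.

Lemma is_series_ext_iff (a b : nat -> R) (s : R) :
  (forall j, a j = b j) -> is_series a s <-> is_series b s.
Proof. intros Hab; split; apply is_series_ext; intros j; now rewrite Hab. Qed.

Lemma is_series_opp_iff (a : nat -> R) (s : R) :
  is_series a s <-> is_series (fun j => - a j) (- s).
Proof.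
  split; [apply (is_series_opp a s)|].
  intros Hopp; rewrite <- (Ropp_involutive s).
  apply (is_series_ext (fun j => - - a j)); [intros j; apply Ropp_involutive|].
  exact (is_series_opp _ _ Hopp).
Qed.

Section SummationByParts.

Variables (A B : nat -> R) (N : nat).
Hypothesis A_nonneg : forall j, (N <= j)%nat -> 0 <= A j.
Hypothesis B_nonneg : forall j, 0 <= B j.
Hypothesis B_nonincr : forall j, B (S j) <= B j.
Hypothesis B_lim : is_lim_seq B 0.

Lemma is_lim_seq_scal_B_succ (c : R) : is_lim_seq (fun K => c * B (S K)) 0.
Proof.
  rewrite <- (Rmult_0_r c).
  apply (is_lim_seq_scal_l _ c 0), (is_lim_seq_incr_1 B 0), B_lim.
Qed.

Lemma boundary_term_ge (K : nat) :
  (N <= K)%nat -> sum_n A N * B (S K) <= sum_n A K * B (S K).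
Proof.
  intros NK; apply Rmult_le_compat_r; [apply B_nonneg|].
  apply (sum_n_le_of_nonneg_from A N _ _ A_nonneg); lia.
Qed.

Lemma by_parts_tail_ge (K M : nat) : (N <= K)%nat -> (K <= M)%nat ->
  sum_n A K * (B (S K) - B (S M))
  <= sum_n (fun j => sum_n A j * (B j - B (S j))) M
     - sum_n (fun j => sum_n A j * (B j - B (S j))) K.
Proof.
  intros NK KM; induction KM as [|M KM IHKM]; [lra|].
  rewrite (sum_n_succ _ M).
  assert (sum_n A K <= sum_n A (S M))
    by (apply (sum_n_le_of_nonneg_from A N _ _ A_nonneg); lia).
  pose proof (B_nonincr (S M)); pose proof (B_nonincr M).
  nra.
Qed.

Lemma product_tail_ge (M K : nat) : (N <= M)%nat -> (M <= K)%nat ->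
  (sum_n A K - sum_n A M) * B (S K)
  <= sum_n (fun j => A j * B j) K - sum_n (fun j => A j * B j) M.
Proof.
  intros NM MK; induction MK as [|K MK IHMK]; [lra|].
  rewrite (sum_n_succ A), (sum_n_succ _ K).
  assert (sum_n A M <= sum_n A K) by (apply (sum_n_le_of_nonneg_from A N _ _ A_nonneg); lia).
  assert (0 <= A (S K)) by (apply A_nonneg; lia).
  pose proof (B_nonincr (S K)); pose proof (B_nonneg (S (S K))).
  nra.
Qed.

(* The upper bound is the tail of the convergent series: let M -> oo in
   by_parts_tail_ge. *)
Lemma boundary_term_lim_of_by_parts (s : R) :
  is_series (fun j => sum_n A j * (B j - B (S j))) s ->
  is_lim_seq (fun K => sum_n A K * B (S K)) 0.
Proof.
  set (f := fun j => sum_n A j * (B j - B (S j))); intros Hf.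
  apply (is_lim_seq_le_le_loc (fun K => sum_n A N * B (S K)) _
           (fun K => s - sum_n f K)).
  - exists N; intros K NK; split; [exact (boundary_term_ge K NK)|].
    enough (Hle : Rbar_le (sum_n A K * B (S K)) (s - sum_n f K)) by exact Hle.
    apply (is_lim_seq_le_loc (fun M => sum_n A K * (B (S K) - B (S M)))
             (fun M => sum_n f M - sum_n f K)).
    + exists K; intros M KM; apply by_parts_tail_ge; lia.
    + replace (sum_n A K * B (S K)) with (sum_n A K * (B (S K) - 0))
        by (rewrite Rminus_0_r; reflexivity).
      apply (is_lim_seq_scal_l _ _ (B (S K) - 0)), is_lim_seq_minus'.
      * apply is_lim_seq_const.
      * apply (is_lim_seq_incr_1 B 0), B_lim.
    + apply is_lim_seq_minus'; [exact Hf | apply is_lim_seq_const].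
  - apply is_lim_seq_scal_B_succ.
  - rewrite <- (Rminus_diag_eq s s) by reflexivity.
    apply is_lim_seq_minus'; [apply is_lim_seq_const | exact Hf].
Qed.

(* Once the partial sums are eps-close to s after M, product_tail_ge bounds
   the boundary term above by sum_n A M * B (S K) + 2 eps, while it is
   bounded below by sum_n A N * B (S K); both bounds tend to 0 with K. *)
Lemma boundary_term_lim_of_product (s : R) :
  is_series (fun j => A j * B j) s ->
  is_lim_seq (fun K => sum_n A K * B (S K)) 0.
Proof.
  set (g := fun j => A j * B j); intros Hg.
  apply is_lim_seq_spec; intros eps.
  change (is_lim_seq (sum_n g) s) in Hg; apply is_lim_seq_spec in Hg.
  assert (eps4 : 0 < eps / 4) by (destruct eps; simpl; lra).
  destruct (Hg (mkposreal _ eps4)) as [M0 HM0]; simpl in HM0.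
  set (M := max N M0).
  pose proof (is_lim_seq_scal_B_succ (sum_n A M)) as HupM.
  pose proof (is_lim_seq_scal_B_succ (sum_n A N)) as HlowN.
  apply is_lim_seq_spec in HupM, HlowN.
  destruct (HupM (mkposreal _ eps4)) as [K1 HK1]; simpl in HK1.
  destruct (HlowN (mkposreal _ eps4)) as [K2 HK2]; simpl in HK2.
  exists (max M (max K1 K2)); intros K HK.
  pose proof (product_tail_ge M K ltac:(lia) ltac:(lia)) as Htail.
  pose proof (boundary_term_ge K ltac:(lia)) as Hlow.
  assert (HgM : Rabs (sum_n g M - s) < eps / 4) by (apply HM0; lia).
  assert (HgK : Rabs (sum_n g K - s) < eps / 4) by (apply HM0; lia).
  specialize (HK1 K ltac:(lia)); specialize (HK2 K ltac:(lia)).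
  rewrite Rminus_0_r in HK1, HK2 |- *.
  apply Rabs_def2 in HgM, HgK, HK1, HK2.
  apply Rabs_def1; fold g in Htail; lra.
Qed.

Lemma is_series_by_parts_nonneg (s : R) :
  is_series (fun j => sum_n A j * (B j - B (S j))) s
  <-> is_series (fun j => A j * B j) s.
Proof.
  pose proof (sum_n_by_parts A B) as Hparts.
  set (f := fun j => sum_n A j * (B j - B (S j))) in Hparts |- *.
  set (g := fun j => A j * B j) in Hparts |- *.
  change (is_lim_seq (sum_n f) s <-> is_lim_seq (sum_n g) s).
  split; intros Hs.
  - pose proof (boundary_term_lim_of_by_parts s Hs) as HE.
    apply (is_lim_seq_ext (fun K => sum_n f K + sum_n A K * B (S K))).
    + intros K; rewrite Hparts; ring.
    + rewrite <- (Rplus_0_r s); exact (is_lim_seq_plus' _ _ _ _ Hs HE).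
  - pose proof (boundary_term_lim_of_product s Hs) as HE.
    apply (is_lim_seq_ext (fun K => sum_n g K - sum_n A K * B (S K))).
    + intros K; rewrite Hparts; ring.
    + rewrite <- (Rminus_0_r s); exact (is_lim_seq_minus' _ _ _ _ Hs HE).
Qed.

End SummationByParts.

Lemma is_series_by_parts (A B : nat -> R) (N : nat) (s : R) :
  (forall j, (N <= j)%nat -> 0 <= A j) \/ (forall j, (N <= j)%nat -> A j <= 0) ->
  (forall j, 0 <= B j) -> (forall j, B (S j) <= B j) -> is_lim_seq B 0 ->
  is_series (fun j => sum_n A j * (B j - B (S j))) s
  <-> is_series (fun j => A j * B j) s.
Proof.
  intros [A_nonneg | A_nonpos] B_nonneg B_nonincr B_lim.
  - exact (is_series_by_parts_nonneg A B N A_nonneg B_nonneg B_nonincr B_lim s).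
  - assert (oppA_nonneg : forall j, (N <= j)%nat -> 0 <= - A j)
      by (intros j Hj; specialize (A_nonpos j Hj); lra).
    rewrite (is_series_opp_iff _ s), (is_series_opp_iff (fun j => A j * B j) s).
    rewrite (is_series_ext_iff (fun j => - (sum_n A j * (B j - B (S j))))
               (fun j => sum_n (fun i => - A i) j * (B j - B (S j))))
      by (intros j; rewrite sum_n_opp; ring).
    rewrite (is_series_ext_iff (fun j => - (A j * B j)) (fun j => - A j * B j))
      by (intros j; ring).
    exact (is_series_by_parts_nonneg _ B N oppA_nonneg B_nonneg B_nonincr B_lim (- s)).
Qed.

Lemma eventually_signed_of_pos_ratio (u c : nat -> R) (N : nat) :
  (forall j, (N <= j)%nat -> 0 < c j) -> (forall j, u (S j) = u j * c j) ->
  (forall j, (N <= j)%nat -> 0 <= u j) \/ (forall j, (N <= j)%nat -> u j <= 0).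
Proof.
  intros c_pos u_succ.
  destruct (Rle_or_lt 0 (u N)) as [uN_nonneg | uN_neg]; [left | right];
    intros j NJ; induction NJ as [|j NJ IHNJ]; try lra;
    rewrite u_succ; specialize (c_pos j NJ); nra.
Qed.

Definition inv_binom (n j : nat) : R := / Binomial.C (j + n) n.

Lemma binom_pos (m k : nat) : 0 < Binomial.C m k.
Proof.
  apply Rdiv_lt_0_compat; [|apply Rmult_lt_0_compat];
    apply lt_0_INR, lt_O_fact.
Qed.

Lemma inv_binom_pos (n j : nat) : 0 < inv_binom n j.
Proof. apply Rinv_0_lt_compat, binom_pos. Qed.

Lemma inv_binom_succ (n j : nat) :
  inv_binom n (S j) = inv_binom n j * INR (S j) / INR (S j + n).
Proof.
  unfold inv_binom; simpl (S j + n)%nat.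
  rewrite pascal_step2 by lia.
  replace (S (j + n) - n)%nat with (S j) by lia.
  pose proof (binom_pos (j + n) n).
  assert (0 < INR (S j)) by (apply lt_0_INR; lia).
  assert (0 < INR (S (j + n))) by (apply lt_0_INR; lia).
  field; lra.
Qed.

Lemma inv_binom_succ_mul (n j : nat) :
  inv_binom n (S j) * INR (S j + n) = inv_binom n j * INR (S j).
Proof.
  rewrite inv_binom_succ.
  assert (0 < INR (S j + n)) by (apply lt_0_INR; lia).
  field; lra.
Qed.

Lemma inv_binom_succ_le (n j : nat) : inv_binom n (S j) <= inv_binom n j.
Proof.
  pose proof (inv_binom_succ_mul n j).
  pose proof (inv_binom_pos n j); pose proof (inv_binom_pos n (S j)).
  assert (INR (S j) <= INR (S j + n)) by (apply le_INR; lia).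
  assert (0 < INR (S j)) by (apply lt_0_INR; lia).
  nra.
Qed.

Lemma inv_binom_mul_le (n j : nat) :
  (1 <= n)%nat -> inv_binom n j * INR (S j) <= 1.
Proof.
  intros hn; induction j as [|j IHj].
  - unfold inv_binom; simpl (0 + n)%nat; rewrite C_n_n; simpl; lra.
  - pose proof (inv_binom_succ_mul n j).
    pose proof (inv_binom_pos n (S j)).
    assert (INR (S (S j)) <= INR (S j + n)) by (apply le_INR; lia).
    nra.
Qed.

Lemma inv_binom_lim (n : nat) : (1 <= n)%nat -> is_lim_seq (inv_binom n) 0.
Proof.
  intros hn.
  apply (is_lim_seq_le_le_loc (fun _ => 0) _ (fun j => / INR (S j))).
  - exists 0%nat; intros j _; split; [apply Rlt_le, inv_binom_pos|].
    pose proof (inv_binom_mul_le n j hn).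
    assert (0 < INR (S j)) by (apply lt_0_INR; lia).
    apply (Rmult_le_reg_r (INR (S j))); [lra|].
    rewrite Rinv_l; lra.
  - apply is_lim_seq_const.
  - apply (is_lim_seq_inv _ p_infty); [|discriminate].
    apply (is_lim_seq_incr_1 INR), is_lim_seq_INR.
Qed.

Definition dharm_num (lam : R) (j : nat) : R :=
  (- lam) ^ j * dfall 1 (1 / lam) (S j).

Definition dharm_term (lam : R) (p j : nat) : R :=
  dharm_num lam j / (INR (S j) ^ p * INR (fact j)).

Lemma dharm_as_sum (lam : R) (p j : nat) :
  dharm lam p (S j) = sum_n (dharm_term lam p) j.
Proof.
  induction j as [|j IHj].
  - rewrite sum_O; cbn [dharm]; rewrite Rplus_0_l; reflexivity.
  - rewrite sum_n_succ, <- IHj; reflexivity.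
Qed.

Lemma dharm_num_succ (lam : R) (j : nat) : lam <> 0 ->
  dharm_num lam (S j) = dharm_num lam j * (INR (S j) - lam).
Proof.
  intros hlam; unfold dharm_num.
  change (dfall 1 (1 / lam) (S (S j)))
    with (dfall 1 (1 / lam) (S j) * (1 - INR (S j) * (1 / lam))).
  simpl pow; field; exact hlam.
Qed.

Lemma dharm_denom_pos (p j : nat) : 0 < INR (S j) ^ p * INR (fact j).
Proof.
  apply Rmult_lt_0_compat; [apply pow_lt | apply lt_0_INR, lt_O_fact].
  apply lt_0_INR; lia.
Qed.

Lemma dharm_term_eventually_signed (lam : R) (p : nat) : lam <> 0 ->
  exists N, (forall j, (N <= j)%nat -> 0 <= dharm_term lam p j)
         \/ (forall j, (N <= j)%nat -> dharm_term lam p j <= 0).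
Proof.
  intros hlam; destruct (INR_unbounded lam) as [N HN]; exists N.
  assert (ratio_pos : forall j, (N <= j)%nat -> 0 < INR (S j) - lam).
  { intros j NJ; assert (INR N <= INR (S j)) by (apply le_INR; lia); lra. }
  destruct (eventually_signed_of_pos_ratio (dharm_num lam) _ N ratio_pos
              (fun j => dharm_num_succ lam j hlam)) as [Hnum | Hnum];
    [left | right]; intros j NJ; specialize (Hnum j NJ);
    pose proof (Rinv_0_lt_compat _ (dharm_denom_pos p j));
    unfold dharm_term, Rdiv; nra.
Qed.

Theorem theorem4 (lam : R) (p n : nat) (hlam : lam <> 0)
  (hp : (1 <= p)%nat) (hn : (1 <= n)%nat) (s : R) :
  is_series (fun j : nat =>
      INR n * dharm lam p (S j)
      / (Binomial.C (S j + n - 1) n * INR (S j + n))) s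
  <->
  is_series (fun j : nat =>
      ((- lam) ^ (S j - 1) * dfall 1 (1 / lam) (S j))
      / (INR (fact (S j - 1)) * INR (S j) ^ p * Binomial.C (S j + n - 1) n)) s.
Proof.
  rewrite (is_series_ext_iff _
    (fun j => sum_n (dharm_term lam p) j * (inv_binom n j - inv_binom n (S j)))).
  2: { intros j; rewrite dharm_as_sum, inv_binom_succ.
       replace (S j + n - 1)%nat with (j + n)%nat by lia; unfold inv_binom.
       pose proof (binom_pos (j + n) n).
       assert (0 < INR (S j + n)) by (apply lt_0_INR; lia).
       rewrite plus_INR in *; field; lra. }
  rewrite (is_series_ext_iff (fun j => _ / _)
    (fun j => dharm_term lam p j * inv_binom n j)).
  2: { intros j; replace (S j + n - 1)%nat with (j + n)%nat by lia.
       replace (S j - 1)%nat with j by lia; unfold dharm_term, dharm_num, inv_binom.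
       pose proof (binom_pos (j + n) n).
       assert (0 < INR (fact j)) by apply lt_0_INR, lt_O_fact.
       assert (0 < INR (S j) ^ p) by (apply pow_lt, lt_0_INR; lia).
       field; lra. }
  destruct (dharm_term_eventually_signed lam p hlam) as [N Hsign].
  apply (is_series_by_parts _ _ N s Hsign).
  - intros j; apply Rlt_le, inv_binom_pos.
  - apply inv_binom_succ_le.
  - exact (inv_binom_lim n hn).
Qed.
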